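(* Let $n\ge1$. For integers $1\le k\le n$ let $$S_k=\binom{n}{k}\frac{(2n-2)!}{2^{n-1}(k-1)!},$$ and let $k_0=\sqrt{n+1}-1$. Then: - $S_k\le S_{k+1}$ for every integer $k$ with $1\le k\le k_0$; - $S_k>S_{k+1}$ for every integer $k$ with $k_0<k<2k_0$; - $S_k>2S_{k+1}$ for every integer $k$ with $2k_0\le k\le n$. Here $S_{n+1}:=0$, consistent with $\binom{n}{n+1}=0$. *)

From mathcomp Require Import all_boot all_order all_algebra.
From mathcomp Require Import reals.
Set Implicit Arguments. Unset Strict Implicit. Unset Printing Implicit Defensive.
Import Order.TTheory GRing.Theory Num.Theory.
Local Open Scope ring_scope.

(* S_k = C(n,k) * (2n-2)! / (2^(n-1) * (k-1)!) as a real number.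
   For k = n+1, 'C(n, n+1) = 0 so Sval R n n.+1 = 0, matching S_{n+1} := 0. *)
Definition Sval (R : realType) (n k : nat) : R :=
  ('C(n, k) * (2 * n - 2)`!)%:R / (2 ^ (n - 1) * (k - 1)`!)%:R.

Definition k0 (R : realType) (n : nat) : R := Num.sqrt (n.+1)%:R - 1.

From mathcomp Require Import all_boot all_order all_algebra.
From mathcomp Require Import reals.
From mathcomp Require Import ring zify.
Import Order.TTheory GRing.Theory Num.Theory.
Local Open Scope ring_scope.

(* Since S_{k+1} / S_k = (n - k) / (k (k + 1)), comparing S_k with c S_{k+1}
   amounts to comparing k (k + 1) with c (n - k).  Squaring, k <= k_0 means
   (k + 1)^2 <= n + 1, i.e. k (k + 1) <= n - k, and 2 k_0 <= k means
   4 (n + 1) <= (k + 2)^2, which forces 2 (n - k) < k (k + 1). *)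

Section SqrtNat.

Variable R : rcfType.

Lemma ler_nat_sqrt (a b : nat) : (b%:R <= Num.sqrt a%:R :> R) = (b ^ 2 <= a)%N.
Proof.
rewrite -(ler_pXn2r (_ : 0 < 2)%N) ?nnegrE ?sqrtr_ge0 ?ler0n //.
by rewrite sqr_sqrtr ?ler0n // -natrX ler_nat.
Qed.

Lemma ler_nat_mul_sqrt (m a b : nat) :
  (m%:R * Num.sqrt a%:R <= b%:R :> R) = (m ^ 2 * a <= b ^ 2)%N.
Proof.
rewrite -(ler_pXn2r (_ : 0 < 2)%N) ?nnegrE ?mulr_ge0 ?sqrtr_ge0 ?ler0n //.
by rewrite exprMn sqr_sqrtr ?ler0n // -!natrX -natrM ler_nat.
Qed.

End SqrtNat.

Section Ratio.

Variables (R : realType) (n : nat).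

Lemma Sval_gt0 k : (1 <= k <= n)%N -> 0 < Sval R n k.
Proof.
case/andP=> k_gt0 le_kn.
by rewrite /Sval divr_gt0 // ltr0n ?muln_gt0 ?bin_gt0 ?fact_gt0 ?expn_gt0 ?le_kn.
Qed.

Lemma SvalS k : (1 <= k)%N ->
  Sval R n k.+1 * (k * k.+1)%:R = Sval R n k * (n - k)%:R.
Proof.
case: k => [//|k] _; rewrite /Sval !subSS !subn0 factS.
have nat_neq0 m : (0 < m)%N -> m%:R != 0 :> R by rewrite pnatr_eq0 -lt0n.
have binS : 'C(n, k.+2)%:R = (n - k.+1)%:R * 'C(n, k.+1)%:R / k.+2%:R :> R.
  by rewrite -natrM -mul_bin_left natrM mulrAC mulfV ?mul1r ?nat_neq0.
rewrite !natrM binS; field.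
by rewrite nat1r -natrD !nat_neq0 ?expn_gt0 ?fact_gt0.
Qed.

Lemma ltr_mul_SvalS (c k : nat) : (1 <= k <= n)%N ->
  (c%:R * Sval R n k.+1 < Sval R n k) = (c * (n - k) < k * k.+1)%N.
Proof.
move=> kn; have k_gt0 : (0 < k)%N by case/andP: kn.
rewrite -(ltr_pM2r (_ : 0 < (k * k.+1)%:R)) ?ltr0n ?muln_gt0 ?k_gt0 //.
by rewrite -mulrA SvalS // mulrCA -natrM ltr_pM2l ?Sval_gt0 // ltr_nat.
Qed.

Lemma ltr_SvalS k : (1 <= k <= n)%N ->
  (Sval R n k.+1 < Sval R n k) = (n - k < k * k.+1)%N.
Proof.
by move=> kn; have := ltr_mul_SvalS 1 k kn; rewrite mulr1n mul1r mul1n.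
Qed.

Lemma ler_nat_k0 k : (k%:R <= k0 R n) = (k.+1 ^ 2 <= n.+1)%N.
Proof. by rewrite /k0 lerBrDr natr1 ler_nat_sqrt. Qed.

Lemma ler_2k0_nat k : (2 * k0 R n <= k%:R) = (4 * n.+1 <= k.+2 ^ 2)%N.
Proof.
by rewrite /k0 mulrBr mulr1 lerBlDr -natrD addn2 ler_nat_mul_sqrt.
Qed.

End Ratio.

Theorem propositionA1 (R : realType) (n : nat) (hn : (1 <= n)%N) :
  (forall k : nat, (1 <= k <= n)%N -> k%:R <= k0 R n ->
     Sval R n k <= Sval R n k.+1) /\
  (forall k : nat, (1 <= k <= n)%N -> k0 R n < k%:R -> k%:R < 2 * k0 R n ->
     Sval R n k > Sval R n k.+1) /\
  (forall k : nat, (1 <= k <= n)%N -> 2 * k0 R n <= k%:R ->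
     Sval R n k > 2 * Sval R n k.+1).
Proof.
split; [|split] => k kn.
- by rewrite ler_nat_k0 leNgt ltr_SvalS // -leqNgt; nia.
- by rewrite ltNge ler_nat_k0 -ltnNge ltr_SvalS //; nia.
- by rewrite ler_2k0_nat => hk; rewrite ltr_mul_SvalS //; nia.
Qed.
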